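(* Let $G$ be a group definable in a first-order structure equipped with a dimension satisfying axioms A1–A4. Let $N$ be a definable normal subgroup of $G$, $H$ a definable subgroup of $G$ containing $N$, and $Y$ a definable subset of $H$ which is large in $H$. Suppose that $G/N$ and $G/N_G(H\setminus Y^H)$ have definable transversals. Then: (a) if $H/N$ is weakly generous in $G/N$, then $Y$ is weakly generous in $G$; (b) if $H/N$ is largely generous in $G/N$, then $Y$ is largely generous in $G$.
   Context: The dimension satisfies, for nonempty definable $A,B$: (A1) for definable $f:A\to B$, $\{b:\dim f^{-1}(b)=m\}$ is definable; (A2) if all fibers of definable $f:A\to B$ have dimension $m$ then $\dim A=\dim f(A)+m$; (A3) $A$ finite iff $\dim A=0$; (A4) $\dim(A\cup B)=\max(\dim A,\dim B)$. The quotient $G/N$ is regarded as a definable group via a definable transversal (a set meeting each coset once), and dimensions in it are computed accordingly. For definable $X\subseteq Y$, $X$ is large in $Y$ if $\dim(Y\setminus X)<\dim Y$. For $X\subseteq G$ and a subgroup $K$, $X^K=\{x^k:x\in X,k\in K\}$; $N_G(Z)$ is the setwise stabilizer of $Z$ under conjugation. A definable $X\subseteq G$ is weakly generous in $G$ if $\dim(X^G)=\dim G$, and largely generous if $X^G$ is large in $G$. *)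

From Stdlib Require List.
From mathcomp Require Import all_boot.
Set Implicit Arguments.
Unset Strict Implicit.
Unset Printing Implicit Defensive.

(* Tuples M^n are functions 'I_n -> M; subsets are predicates.         *)
Definition tset (M : Type) (n : nat) := ('I_n -> M) -> Prop.

Definition join {M : Type} {m n : nat} (x : 'I_m -> M) (y : 'I_n -> M)
  : 'I_(m + n) -> M :=
  fun i => match split i with inl j => x j | inr k => y k end.
Definition fstp {M : Type} {m n : nat} (z : 'I_(m + n) -> M) : 'I_m -> M :=
  fun j => z (lshift n j).
Definition sndp {M : Type} {m n : nat} (z : 'I_(m + n) -> M) : 'I_n -> M :=
  fun k => z (rshift m k).

Definition fgraph {M : Type} {m n : nat} (A : tset M m)
  (f : ('I_m -> M) -> ('I_n -> M)) : tset M (m + n) :=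
  fun z => A (fstp z) /\ f (fstp z) = sndp z.
Definition fiber {M : Type} {m n : nat} (A : tset M m)
  (f : ('I_m -> M) -> ('I_n -> M)) (b : 'I_n -> M) : tset M m :=
  fun a => A a /\ f a = b.
Definition fimage {M : Type} {m n : nat} (A : tset M m)
  (f : ('I_m -> M) -> ('I_n -> M)) : tset M n :=
  fun b => exists a, A a /\ f a = b.
Definition nonempty {T : Type} (A : T -> Prop) := exists x, A x.
Definition finite_set {T : Type} (A : T -> Prop) :=
  exists s : list T, forall x, A x -> List.In x s.

(* A first-order structure, given through its family of definable      *)
(* (with parameters) sets: closed under boolean combinations, equality *)
(* of coordinates, constants (parameters), substitution of variables   *)
(* and existential quantification.  Equipped with a dimension on       *)
(* definable sets satisfying (A1)-(A4) (stated for nonempty sets).     *)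
Record dimStruct := DimStruct {
  carrier :> Type;
  Def : forall n, tset carrier n -> Prop;
  dim : forall n, tset carrier n -> nat;
  def_ext : forall n (A B : tset carrier n),
    Def A -> (forall x, A x <-> B x) -> Def B;
  def_True : forall n, Def (fun _ : 'I_n -> carrier => True);
  def_compl : forall n (A : tset carrier n), Def A -> Def (fun x => ~ A x);
  def_inter : forall n (A B : tset carrier n),
    Def A -> Def B -> Def (fun x => A x /\ B x);
  def_eq : forall n (i j : 'I_n), Def (fun x : 'I_n -> carrier => x i = x j);
  def_const : forall n (i : 'I_n) (c : carrier),
    Def (fun x : 'I_n -> carrier => x i = c);
  def_reindex : forall m n (g : 'I_m -> 'I_n) (A : tset carrier m),
    Def A -> Def (fun x : 'I_n -> carrier => A (fun i => x (g i)));
  def_proj : forall m n (A : tset carrier (m + n)),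
    Def A -> Def (fun x : 'I_m -> carrier =>
                    exists y : 'I_n -> carrier, A (join x y));
  dim_A1 : forall m n (A : tset carrier m) (B : tset carrier n)
      (f : ('I_m -> carrier) -> ('I_n -> carrier)),
    Def A -> Def B -> nonempty A -> nonempty B ->
    (forall a, A a -> B (f a)) -> Def (fgraph A f) ->
    forall k : nat,
      Def (fun b => B b /\ nonempty (fiber A f b) /\ dim (fiber A f b) = k);
  dim_A2 : forall m n (A : tset carrier m) (B : tset carrier n)
      (f : ('I_m -> carrier) -> ('I_n -> carrier)),
    Def A -> Def B -> nonempty A -> nonempty B ->
    (forall a, A a -> B (f a)) -> Def (fgraph A f) ->
    forall k : nat,
      (forall b, fimage A f b -> dim (fiber A f b) = k) ->
      dim A = (dim (fimage A f) + k)%N;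
  dim_A3 : forall n (A : tset carrier n),
    Def A -> nonempty A -> (finite_set A <-> dim A = 0%N);
  dim_A4 : forall n (A B : tset carrier n),
    Def A -> Def B -> nonempty A -> nonempty B ->
    dim (fun x => A x \/ B x) = maxn (dim A) (dim B)
}.

Arguments Def {d n}.
Arguments dim {d n}.

Record defGroup (S : dimStruct) := DefGroup {
  gn : nat;
  gset : tset S gn;
  gmul : ('I_gn -> S) -> ('I_gn -> S) -> ('I_gn -> S);
  ginv : ('I_gn -> S) -> ('I_gn -> S);
  gone : 'I_gn -> S;
  gset_def : Def gset;
  gmul_def : Def (fun z : 'I_(gn + gn + gn) -> S =>
                    gset (fstp (fstp z)) /\ gset (sndp (fstp z)) /\
                    gmul (fstp (fstp z)) (sndp (fstp z)) = sndp z);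
  gone_in : gset gone;
  gmul_in : forall x y, gset x -> gset y -> gset (gmul x y);
  ginv_in : forall x, gset x -> gset (ginv x);
  gmulA : forall x y z, gset x -> gset y -> gset z ->
    gmul x (gmul y z) = gmul (gmul x y) z;
  gmul1 : forall x, gset x -> gmul gone x = x;
  gmulV : forall x, gset x -> gmul (ginv x) x = gone
}.

Arguments gn {S}.
Arguments gset {S}.
Arguments gmul {S}.
Arguments ginv {S}.
Arguments gone {S}.

Section GroupNotions.
Variable S : dimStruct.
Variable G : defGroup S.
Local Notation T := ('I_(gn G) -> S).
Local Notation "x * y" := (gmul G x y).
Local Notation "x ^-1" := (ginv G x).

Definition gconj (x k : T) : T := k^-1 * (x * k).

Definition subgroup (H : tset S (gn G)) : Prop :=
  (forall x, H x -> gset G x) /\ H (gone G) /\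
  (forall x y, H x -> H y -> H (x * y)) /\ (forall x, H x -> H (x^-1)).

Definition def_subgroup (H : tset S (gn G)) : Prop := Def H /\ subgroup H.

Definition def_normal_subgroup (N : tset S (gn G)) : Prop :=
  def_subgroup N /\ forall x g, N x -> gset G g -> N (gconj x g).

Definition conjset (X K : tset S (gn G)) : tset S (gn G) :=
  fun y => exists x k, X x /\ K k /\ y = gconj x k.

Definition normalizer (Z : tset S (gn G)) : tset S (gn G) :=
  fun g => gset G g /\ (forall z, Z z <-> exists z', Z z' /\ z = gconj z' g).

Definition coset_transversal (K Tr : tset S (gn G)) : Prop :=
  (forall t, Tr t -> gset G t) /\
  forall g, gset G g ->
    exists t, (Tr t /\ K (t^-1 * g)) /\
      forall t', Tr t' -> K (t'^-1 * g) -> t' = t.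

(* G/N realised on a coset_transversal Tr of N in G: a coset xN is represented
   by the unique t in Tr with t^-1 x in N.  The image of X <= G: *)
Definition qimage (N Tr X : tset S (gn G)) : tset S (gn G) :=
  fun t => Tr t /\ exists x, X x /\ N (t^-1 * x).

(* conjugates X^K computed in the quotient group G/N (realised on Tr),
   for X, K subsets of Tr: the representatives of the cosets
   (xN)^(kN) = (k^-1 x k) N. *)
Definition qconjset (N Tr X K : tset S (gn G)) : tset S (gn G) :=
  fun t => Tr t /\ exists x k, X x /\ K k /\ N (t^-1 * gconj x k).

End GroupNotions.

Arguments gconj {S} G.
Arguments subgroup {S} G.
Arguments def_subgroup {S} G.
Arguments def_normal_subgroup {S} G.
Arguments conjset {S} G.
Arguments normalizer {S} G.
Arguments coset_transversal {S} G.
Arguments qimage {S} G.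
Arguments qconjset {S} G.

(* dimension-theoretic notions (dim of the empty set is -oo) *)
Definition dim_lt {S : dimStruct} {n} (A B : tset S n) : Prop :=
  nonempty B /\ (~ nonempty A \/ (dim A < dim B)%N).

Definition large_in {S : dimStruct} {n} (X Y : tset S n) : Prop :=
  (forall x, X x -> Y x) /\ dim_lt (fun y => Y y /\ ~ X y) Y.

Definition dim_eq {S : dimStruct} {n} (A B : tset S n) : Prop :=
  nonempty A /\ nonempty B /\ dim A = dim B.

Definition weakly_generous {S : dimStruct} (G : defGroup S) (X : tset S (gn G)) :=
  dim_eq (conjset G X (gset G)) (gset G).
Definition largely_generous {S : dimStruct} (G : defGroup S) (X : tset S (gn G)) :=
  large_in (conjset G X (gset G)) (gset G).

(* H/N weakly / largely generous in G/N, G/N realised on coset_transversal Tr *)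
Definition q_weakly_generous {S : dimStruct} (G : defGroup S) (N Tr H : tset S (gn G)) :=
  dim_eq (qconjset G N Tr (qimage G N Tr H) Tr) Tr.
Definition q_largely_generous {S : dimStruct} (G : defGroup S) (N Tr H : tset S (gn G)) :=
  large_in (qconjset G N Tr (qimage G N Tr H) Tr) Tr.

Arguments weakly_generous {S} G.
Arguments largely_generous {S} G.
Arguments q_weakly_generous {S} G.
Arguments q_largely_generous {S} G.

(* Let Z = H \ Y^H and K = N_G(Z), which contains H.  Every conjugate of an
   element of H lies in Y^G or in Z^G, and Z^G is the image of (G/K) x Z under
   (t, z) |-> z^(t^-1); as Y is large in H, this gives
   dim Z^G <= dim G/K + dim Z < dim G/K + dim H <= dim G.
   On the other hand H^G and its complement are unions of cosets of N, and
   their images in G/N are (H/N)^(G/N) and its complement, so their dimensions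
   exceed those images by dim N.  Hence if (H/N)^(G/N) has full dimension so
   does H^G = Y^G u Z^G, and thus Y^G; and if (H/N)^(G/N) is large, then
   G \ Y^G, being contained in (G \ H^G) u Z^G, is small. *)

From Pilot Require Import Defs.
From mathcomp Require Import all_boot.
From Stdlib Require Import FunctionalExtensionality PropExtensionality ClassicalEpsilon Classical.
Set Implicit Arguments.
Unset Strict Implicit.
Unset Printing Implicit Defensive.

Local Notation fgraph := Defs.fgraph. (* not finfun's [fgraph] *)

Lemma pred_ext (T : Type) (A B : T -> Prop) : (forall x, A x <-> B x) -> A = B.
Proof.
move=> AB; apply: functional_extensionality => x.
exact: propositional_extensionality (AB x).
Qed.

Lemma union_empty_l (T : Type) (A B : T -> Prop) :
  ~ nonempty A -> (fun x => A x \/ B x) = B.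
Proof. by move=> noA; apply: pred_ext => x; split=> [[Ax|] | ]; auto; case: noA; exists x. Qed.

Lemma union_empty_r (T : Type) (A B : T -> Prop) :
  ~ nonempty B -> (fun x => A x \/ B x) = A.
Proof. by move=> noB; apply: pred_ext => x; split=> [[|Bx] | ]; auto; case: noB; exists x. Qed.

Section Tuples.
Variables (M : Type) (m n : nat).

Lemma fstp_join (x : 'I_m -> M) (y : 'I_n -> M) : fstp (join x y) = x.
Proof.
by apply: functional_extensionality => j; rewrite /fstp /join (unsplitK (inl j)).
Qed.

Lemma sndp_join (x : 'I_m -> M) (y : 'I_n -> M) : sndp (join x y) = y.
Proof.
by apply: functional_extensionality => k; rewrite /sndp /join (unsplitK (inr k)).
Qed.

Lemma join_fstp_sndp (z : 'I_(m + n) -> M) : join (fstp z) (sndp z) = z.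
Proof.
apply: functional_extensionality => i; rewrite /fstp /sndp /join.
by case: splitP => [j|k] /= e; congr z; apply/val_inj; rewrite /= e.
Qed.

Lemma fgraph_join (A : tset M m) (f : ('I_m -> M) -> ('I_n -> M)) a b :
  fgraph A f (join a b) <-> A a /\ f a = b.
Proof. by rewrite /Defs.fgraph fstp_join sndp_join. Qed.

End Tuples.

Section Definability.
Variable S : dimStruct.
Implicit Types m n : nat.

Lemma def_or n (A B : tset S n) : Def A -> Def B -> Def (fun x => A x \/ B x).
Proof.
move=> dA dB; apply: def_ext (def_compl (def_inter (def_compl dA) (def_compl dB))) _.
move=> x; split; last by case=> AB [nA nB].
by move/not_and_or; case=> /NNPP; [left|right].
Qed.

Lemma def_impl n (A B : tset S n) : Def A -> Def B -> Def (fun x => A x -> B x).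
Proof.
move=> dA dB; apply: def_ext (def_or (def_compl dA) dB) _ => x.
by split; [case=> // nA /nA | move/imply_to_or].
Qed.

Lemma def_iff n (A B : tset S n) : Def A -> Def B -> Def (fun x => A x <-> B x).
Proof. by move=> dA dB; apply: def_ext (def_inter (def_impl dA dB) (def_impl dB dA)) _. Qed.

Lemma def_exists m n (Q : ('I_m -> S) -> ('I_n -> S) -> Prop) :
  Def (fun z : 'I_(m + n) -> S => Q (fstp z) (sndp z)) ->
  Def (fun x => exists y, Q x y).
Proof.
move=> dQ; apply: def_ext (def_proj dQ) _ => x.
by split; case=> y Qy; exists y; move: Qy; rewrite /= fstp_join sndp_join.
Qed.

Lemma def_forall m n (Q : ('I_m -> S) -> ('I_n -> S) -> Prop) :
  Def (fun z : 'I_(m + n) -> S => Q (fstp z) (sndp z)) ->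
  Def (fun x => forall y, Q x y).
Proof.
move=> dQ.
apply: def_ext (def_compl (def_exists (Q := fun x y => ~ Q x y) (def_compl dQ))) _ => x.
split; last by move=> allQ [y]; apply.
by move=> nexQ y; apply: NNPP => nQ; apply: nexQ; exists y.
Qed.

Lemma def_forall_seq n k (P : 'I_k -> tset S n) (s : seq 'I_k) :
  (forall i, Def (P i)) -> Def (fun x => forall i, i \in s -> P i x).
Proof.
move=> dP; elim: s => [|i s IHs].
  by apply: def_ext (def_True S n) _.
apply: def_ext (def_inter (dP i) IHs) _ => x; split.
  by case=> Pi Ps j; rewrite in_cons => /predU1P[->|/Ps].
by move=> Ps; split=> [|j sj]; apply: Ps; rewrite in_cons ?eqxx ?sj ?orbT.
Qed.

Lemma def_eq_tuple n k (g1 g2 : 'I_k -> 'I_n) :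
  Def (fun x : 'I_n -> S => (fun j => x (g1 j)) = (fun j => x (g2 j))).
Proof.
apply: def_ext (def_forall_seq (enum 'I_k) (fun i => def_eq S (g1 i) (g2 i))) _.
move=> x; split; last by move=> e i _; exact: equal_f e i.
by move=> e; apply: functional_extensionality => i; apply: e; rewrite mem_enum.
Qed.

Lemma def_const_tuple n k (g : 'I_k -> 'I_n) (c : 'I_k -> S) :
  Def (fun x : 'I_n -> S => (fun j => x (g j)) = c).
Proof.
apply: def_ext (def_forall_seq (enum 'I_k) (fun i => def_const (g i) (c i))) _.
move=> x; split; last by move=> e i _; exact: equal_f e i.
by move=> e; apply: functional_extensionality => i; apply: e; rewrite mem_enum.
Qed.

Lemma def_reindex2 p q (P : ('I_p -> S) -> ('I_q -> S) -> Prop) :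
  Def (fun z : 'I_(p + q) -> S => P (fstp z) (sndp z)) ->
  forall n (g1 : 'I_p -> 'I_n) (g2 : 'I_q -> 'I_n),
  Def (fun x : 'I_n -> S => P (fun j => x (g1 j)) (fun j => x (g2 j))).
Proof.
move=> dP n g1 g2; apply: def_ext (def_reindex (fun i => join g1 g2 i) dP) _ => x.
rewrite -[fstp _]/(fun j => x (fstp (join g1 g2) j)).
by rewrite -[sndp _]/(fun j => x (sndp (join g1 g2) j)) fstp_join sndp_join.
Qed.

Lemma def_reindex3 p q r (P : ('I_p -> S) -> ('I_q -> S) -> ('I_r -> S) -> Prop) :
  Def (fun z : 'I_(p + q + r) -> S => P (fstp (fstp z)) (sndp (fstp z)) (sndp z)) ->
  forall n (g1 : 'I_p -> 'I_n) (g2 : 'I_q -> 'I_n) (g3 : 'I_r -> 'I_n),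
  Def (fun x : 'I_n -> S => P (fun j => x (g1 j)) (fun j => x (g2 j)) (fun j => x (g3 j))).
Proof.
move=> dP n g1 g2 g3.
apply: def_ext (def_reindex (fun i => join (join g1 g2) g3 i) dP) _ => x.
rewrite -[X in P X _ _]/(fun j => x (fstp (fstp (join (join g1 g2) g3)) j)).
rewrite -[X in P _ X _]/(fun j => x (sndp (fstp (join (join g1 g2) g3)) j)).
rewrite -[X in P _ _ X]/(fun j => x (sndp (join (join g1 g2) g3) j)).
by rewrite !fstp_join !sndp_join.
Qed.

Lemma def_swap m n (P : ('I_m -> S) -> ('I_n -> S) -> Prop) :
  Def (fun z : 'I_(m + n) -> S => P (fstp z) (sndp z)) ->
  Def (fun z : 'I_(n + m) -> S => P (sndp z) (fstp z)).
Proof. by move=> dP; apply: def_reindex2 dP _ (@rshift n m) (@lshift n m). Qed.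

Lemma def_fix_snd m n (P : ('I_m -> S) -> ('I_n -> S) -> Prop) c :
  Def (fun z : 'I_(m + n) -> S => P (fstp z) (sndp z)) -> Def (fun a => P a c).
Proof.
move=> dP; have dPc := def_inter dP (def_const_tuple (@rshift m n) c).
apply: def_ext (def_exists (Q := fun a y => P a y /\ y = c) dPc) _ => a.
by split=> [[y [Py <-]] | Pc]; last exists c.
Qed.

Lemma def_fix_fst p q r (P : ('I_p -> S) -> ('I_q -> S) -> ('I_r -> S) -> Prop) c :
  Def (fun z : 'I_(p + q + r) -> S => P (fstp (fstp z)) (sndp (fstp z)) (sndp z)) ->
  Def (fun z : 'I_(q + r) -> S => P c (fstp z) (sndp z)).
Proof.
move=> dP; pose Q z y := P y (fstp z) (sndp z) /\ y = c.
have dQ : Def (fun w : 'I_(q + r + p) -> S => Q (fstp w) (sndp w)).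
  apply: def_inter (def_const_tuple (@rshift (q + r) p) c).
  exact: def_reindex3 dP _ (@rshift (q + r) p) (fun j => lshift p (lshift r j))
    (fun j => lshift p (rshift q j)).
apply: def_ext (def_exists dQ) _ => z.
by split=> [[y [Py <-]] | Pc]; last exists c.
Qed.

Lemma def_fgraph_join m n (A : tset S m) (f : ('I_m -> S) -> ('I_n -> S)) :
  Def (fgraph A f) -> Def (fun z => fgraph A f (join (fstp z) (sndp z))).
Proof. by move=> dgf; apply: def_ext dgf _ => z; rewrite join_fstp_sndp. Qed.

Lemma def_fimage m n (A : tset S m) (f : ('I_m -> S) -> ('I_n -> S)) :
  Def (fgraph A f) -> Def (fimage A f).
Proof.
move=> /def_fgraph_join dgf.
have dswap := def_swap (P := fun a b => fgraph A f (join a b)) dgf.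
apply: def_ext (def_exists (Q := fun b a => fgraph A f (join a b)) dswap) _ => b.
by split; case=> a /fgraph_join; exists a.
Qed.

Lemma def_fiber m n (A : tset S m) (f : ('I_m -> S) -> ('I_n -> S)) b :
  Def (fgraph A f) -> Def (fiber A f b).
Proof.
move=> /def_fgraph_join dgf.
apply: def_ext (def_fix_snd (P := fun a b => fgraph A f (join a b)) b dgf) _ => a.
exact: fgraph_join.
Qed.

Lemma def_preimage m n (A : tset S m) (f : ('I_m -> S) -> ('I_n -> S)) (C : tset S n) :
  Def (fgraph A f) -> Def C -> Def (fun a => A a /\ C (f a)).
Proof.
move=> /def_fgraph_join dgf dC.
have dQ := def_inter dgf (def_reindex (@rshift m n) dC).
apply: def_ext (def_exists (Q := fun a b => fgraph A f (join a b) /\ C b) dQ) _ => a.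
split=> [[b [/fgraph_join[Aa <-] Cfa]] | [Aa Cfa]]; first by [].
by exists (f a); split=> //; apply/fgraph_join.
Qed.

Lemma def_fgraph_preimage m n (A : tset S m) (f : ('I_m -> S) -> ('I_n -> S))
    (C : tset S n) :
  Def (fgraph A f) -> Def C -> Def (fgraph (fun a => A a /\ C (f a)) f).
Proof.
move=> dgf dC; apply: def_ext (def_inter dgf (def_reindex (@rshift m n) dC)) _ => z.
rewrite /Defs.fgraph -/(sndp z).
by split=> [[[Aa e] Cz] | [[Aa Cfa] e]]; [rewrite e | rewrite -e]; do !split.
Qed.

End Definability.

Section Dimension.
Variable S : dimStruct.
Implicit Types m n : nat.

(* [dim A < D] with the convention that the empty set has dimension -oo. *)
Definition dim_ltn n (A : tset S n) (D : nat) := ~ nonempty A \/ (dim A < D)%N.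

Lemma dim_sub n (A B : tset S n) :
  Def A -> Def B -> nonempty A -> (forall x, A x -> B x) -> (dim A <= dim B)%N.
Proof.
move=> dA dB neA AB; have dBA := def_inter dB (def_compl dA).
have [neBA | noBA] := classic (nonempty (fun x => B x /\ ~ A x)).
  have -> : B = (fun x => A x \/ (B x /\ ~ A x)).
    apply: pred_ext => x; split=> [Bx | [/AB | []] //].
    by have [Ax | nAx] := classic (A x); [left | right].
  by rewrite (dim_A4 dA dBA neA neBA) leq_maxl.
suff -> : B = A by [].
apply: pred_ext => x; split=> [Bx | /AB //].
by apply: NNPP => nAx; apply: noBA; exists x.
Qed.

Lemma dim_ltn_sub n (A B : tset S n) D :
  Def A -> Def B -> (forall x, A x -> B x) -> dim_ltn B D -> dim_ltn A D.
Proof.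
move=> dA dB AB [noB | ltBD]; first by left=> -[x /AB Bx]; apply: noB; exists x.
have [neA | noA] := classic (nonempty A); last by left.
by right; apply: leq_ltn_trans ltBD; apply: dim_sub.
Qed.

Lemma dim_ltn_union n (A B : tset S n) D : Def A -> Def B ->
  dim_ltn A D -> dim_ltn B D -> dim_ltn (fun x => A x \/ B x) D.
Proof.
move=> dA dB ltA ltB.
have [neA | noA] := classic (nonempty A); last by rewrite union_empty_l.
have [neB | noB] := classic (nonempty B); last by rewrite union_empty_r.
case: ltA ltB => [//|ltA] [//|ltB].
by right; rewrite (dim_A4 dA dB neA neB) gtn_max ltA ltB.
Qed.

Lemma dim_ltn_bigcup n (B : nat -> tset S n) K D :
  (forall k, k <= K -> Def (B k) /\ dim_ltn (B k) D) ->
  let U := fun x => exists2 k, k <= K & B k x in Def U /\ dim_ltn U D.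
Proof.
elim: K => [|K IHK] ltB U.
  have -> : U = B 0 by apply: pred_ext => x; split=> [[[|k] //] | B0x]; exists 0.
  exact: ltB.
have [dU' ltU'] := IHK (fun k leK => ltB k (leqW leK)).
have [dBK ltBK] := ltB K.+1 (leqnn _).
have -> : U = fun x => (exists2 k, k <= K & B k x) \/ B K.+1 x.
  apply: pred_ext => x; split=> [[k] | [[k leK Bkx] | BKx]]; last by exists K.+1.
    by rewrite leq_eqVlt => /predU1P[-> | ltK Bkx]; [right | left; exists k].
  by exists k => //; apply: leqW.
by split; [apply: def_or | apply: dim_ltn_union].
Qed.

Lemma dim_injective_image m n (A : tset S m) (f : ('I_m -> S) -> ('I_n -> S)) :
  Def A -> Def (fgraph A f) -> nonempty A ->
  (forall a1 a2, A a1 -> A a2 -> f a1 = f a2 -> a1 = a2) ->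
  dim A = dim (fimage A f).
Proof.
move=> dA dgf [a Aa] injf.
have := dim_A2 dA (def_True S n) (ex_intro _ a Aa) (ex_intro _ (f a) I)
  (fun _ _ => I) dgf (k := 0).
rewrite addn0; apply=> b [a1 [Aa1 fa1]].
apply/(dim_A3 (def_fiber b dgf) (ex_intro _ a1 (conj Aa1 fa1))).
exists [:: a1] => a2 [Aa2 fa2]; left.
by apply: injf => //; rewrite fa1 fa2.
Qed.

Section Image.
Variables (m n : nat) (A : tset S m) (f : ('I_m -> S) -> ('I_n -> S)).
Hypotheses (dA : Def A) (dgf : Def (fgraph A f)) (neA : nonempty A).

Let level k b := fimage A f b /\ nonempty (fiber A f b) /\ dim (fiber A f b) = k.

Let def_level k : Def (level k).
Proof.
have [a Aa] := neA.
apply: dim_A1 dA (def_fimage dgf) neA (ex_intro _ (f a) _) _ dgf k.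
  by exists a.
by move=> a1 Aa1; exists a1.
Qed.

(* (A2) applied to [f] restricted to the preimage of [level k] gives
   [dim (level k) + k <= dim A]. *)
Let dim_level_le k : dim_ltn (level k) (dim A).+1.
Proof.
have [[b levb] | nolev] := classic (nonempty (level k)); last by left.
right; pose Ak a := A a /\ level k (f a).
have dAk : Def Ak := def_preimage dgf (def_level k).
have dgk : Def (fgraph Ak f) := def_fgraph_preimage dgf (def_level k).
have [_ [[a [Aa fab]] _]] := levb.
have neAk : nonempty Ak by exists a; split; rewrite // fab.
have imgAk : fimage Ak f = level k.
  apply: pred_ext => b'; split=> [[a' [[_ lev'] <-]] // | lev'].
  have [_ [[a' [Aa' fa']] _]] := lev'.
  by exists a'; split; [split; rewrite ?fa' | ].
have fibAk c : fimage Ak f c -> dim (fiber Ak f c) = k.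
  move=> [a' [[_ lev'] <-]]; rewrite -lev'.2.2; congr dim.
  apply: pred_ext => a''; split=> [[[Aa'' _] e] // | [Aa'' e]].
  by split; [split; rewrite // e | ].
have := dim_A2 dAk (def_level k) neAk (ex_intro _ b levb) (fun _ Aka => Aka.2) dgk fibAk.
rewrite imgAk => dimAk; rewrite ltnS (leq_trans (leq_addr k _)) // -dimAk.
exact: dim_sub dAk dA neAk (fun _ Aka => Aka.1).
Qed.

Lemma dim_image_le : (dim (fimage A f) <= dim A)%N.
Proof.
have [dU ltU] := dim_ltn_bigcup (K := dim A) (D := (dim A).+1)
  (fun k _ => conj (def_level k) (dim_level_le k)).
have imgU : fimage A f = fun b => exists2 k, k <= dim A & level k b.
  apply: pred_ext => b; split=> [imgb | [k _ [] //]].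
  have [a [Aa fab]] := imgb; have fibb : nonempty (fiber A f b) by exists a.
  exists (dim (fiber A f b)); last by [].
  by apply: dim_sub (def_fiber b dgf) dA fibb _ => a' [].
rewrite imgU; case: ltU => [[] | //]; rewrite -imgU.
by have [a Aa] := neA; exists (f a), a.
Qed.

End Image.

Lemma dim_prod m n (A : tset S m) (B : tset S n) :
  Def A -> Def B -> nonempty A -> nonempty B ->
  let P := fun z : 'I_(m + n) -> S => A (fstp z) /\ B (sndp z) in
  Def P /\ dim P = (dim A + dim B)%N.
Proof.
move=> dA dB [a0 Aa0] [b0 Bb0] P.
have dP : Def P.
  exact: def_inter (def_reindex (@lshift m n) dA) (def_reindex (@rshift m n) dB).
have neP : nonempty P by exists (join a0 b0); rewrite /P fstp_join sndp_join.
have dg1 : Def (fgraph P fstp).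
  rewrite /Defs.fgraph.
  exact (def_inter (def_reindex (@lshift (m + n) m) dP)
    (@def_eq_tuple S _ _ (fun j => lshift m (lshift n j)) (@rshift (m + n) m))).
have fib1 a : fimage P fstp a -> dim (fiber P fstp a) = dim B.
  move=> [z [[Aa _] <-]]; have dF := def_fiber (fstp z) dg1.
  have dg2 : Def (fgraph (fiber P fstp (fstp z)) sndp).
    rewrite /Defs.fgraph.
    exact (def_inter (def_reindex (@lshift (m + n) n) dF)
      (@def_eq_tuple S _ _ (fun j => lshift n (rshift m j)) (@rshift (m + n) n))).
  have neF : nonempty (fiber P fstp (fstp z)) by exists (join (fstp z) b0);
    rewrite /fiber /P fstp_join sndp_join.
  rewrite (dim_injective_image dF dg2 neF); last first.
    by move=> z1 z2 [_ e1] [_ e2] e; rewrite -[z1]join_fstp_sndp -[z2]join_fstp_sndp e1 e2 e.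
  congr dim; apply: pred_ext => b; split=> [[z' [[[_ Bb] _] <-]] // | Bb].
  by exists (join (fstp z) b); rewrite /fiber /P fstp_join sndp_join.
rewrite (dim_A2 dP dA neP (ex_intro _ a0 Aa0) (fun z Pz => Pz.1) dg1 fib1).
split=> //; congr (dim _ + _)%N; apply: pred_ext => a.
by split=> [[z [[Az _] <-]] // | Aa]; exists (join a b0); rewrite /P fstp_join sndp_join.
Qed.

End Dimension.

Section GroupLaws.
Variables (S : dimStruct) (G : defGroup S).
Local Notation Gs := (gset G).
Local Notation "x * y" := (gmul G x y).
Local Notation "x ^-1" := (ginv G x).
Local Notation one := (gone G).
Implicit Types x y z a b k : 'I_(gn G) -> S.

Lemma gmulgV x : Gs x -> x * x^-1 = one.
Proof.
move=> Gx; have Gx' := ginv_in Gx; have Gx'' := ginv_in Gx'.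
have Gxx' := gmul_in Gx Gx'.
rewrite -(gmul1 Gxx') -{1}(gmulV Gx') -gmulA //.
by rewrite (gmulA Gx' Gx Gx') (gmulV Gx) gmul1 // gmulV.
Qed.

Lemma gmulg1 x : Gs x -> x * one = x.
Proof.
move=> Gx; have Gx' := ginv_in Gx.
by rewrite -(gmulV Gx) gmulA // gmulgV // gmul1.
Qed.

Lemma gmulKVg x y : Gs x -> Gs y -> x * (x^-1 * y) = y.
Proof.
move=> Gx Gy; have Gx' := ginv_in Gx.
by rewrite gmulA // gmulgV // gmul1.
Qed.

Lemma gmulI a x y : Gs a -> Gs x -> Gs y -> a * x = a * y -> x = y.
Proof.
move=> Ga Gx Gy e; have Ga' := ginv_in Ga.
by rewrite -(gmul1 Gx) -(gmul1 Gy) -(gmulV Ga) -!gmulA // e.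
Qed.

Lemma ginv_unique x y : Gs x -> Gs y -> y * x = one -> y = x^-1.
Proof.
move=> Gx Gy yx1; have Gx' := ginv_in Gx.
by rewrite -(gmulg1 Gy) -(gmulgV Gx) gmulA // yx1 gmul1.
Qed.

Lemma ginvK x : Gs x -> (x^-1)^-1 = x.
Proof.
move=> Gx; have Gx' := ginv_in Gx.
by symmetry; apply: ginv_unique; rewrite ?gmulgV.
Qed.

Lemma ginvM x y : Gs x -> Gs y -> (x * y)^-1 = y^-1 * x^-1.
Proof.
move=> Gx Gy; have Gx' := ginv_in Gx; have Gy' := ginv_in Gy.
have Gxy := gmul_in Gx Gy; have Gy'x' := gmul_in Gy' Gx'.
symmetry; apply: ginv_unique => //.
by rewrite -gmulA // (gmulA Gx' Gx Gy) gmulV // gmul1 // gmulV.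
Qed.

Lemma ginv1 : one^-1 = one.
Proof. by have G1 := gone_in G; symmetry; apply: ginv_unique; rewrite ?gmul1. Qed.

Lemma gconj_in x k : Gs x -> Gs k -> Gs (gconj G x k).
Proof. by move=> Gx Gk; apply: gmul_in (ginv_in Gk) (gmul_in Gx Gk). Qed.

Lemma gconj1 x : Gs x -> gconj G x one = x.
Proof.
move=> Gx; have G1 := gone_in G.
by rewrite /gconj ginv1 gmul1 ?gmulg1 // gmul_in.
Qed.

Lemma gconjM x a b : Gs x -> Gs a -> Gs b ->
  gconj G (gconj G x a) b = gconj G x (a * b).
Proof.
move=> Gx Ga Gb; have Ga' := ginv_in Ga; have Gb' := ginv_in Gb.
have Gxa := gmul_in Gx Ga; have Gxab := gmul_in Gx (gmul_in Ga Gb).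
rewrite /gconj ginvM // -(gmulA Gb' Ga') //; congr (_ * _).
by rewrite -(gmulA Ga' Gxa Gb) (gmulA Gx Ga Gb).
Qed.

Lemma gconjK x k : Gs x -> Gs k -> gconj G (gconj G x k) k^-1 = x.
Proof. by move=> Gx Gk; have Gk' := ginv_in Gk; rewrite gconjM // gmulgV // gconj1. Qed.

Lemma gconjVK x k : Gs x -> Gs k -> gconj G (gconj G x k^-1) k = x.
Proof. by move=> Gx Gk; have Gk' := ginv_in Gk; rewrite gconjM // gmulV // gconj1. Qed.

End GroupLaws.

Section GroupDefinability.
Variables (S : dimStruct) (G : defGroup S).
Local Notation n := (gn G).
Local Notation Gs := (gset G).
Local Notation "x * y" := (gmul G x y).
Local Notation "x ^-1" := (ginv G x).
Local Notation one := (gone G).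
Implicit Types x y z a b k t : 'I_n -> S.

Definition mul_graph a b c := Gs a /\ Gs b /\ a * b = c.
Definition inv_graph k i := Gs k /\ i = k^-1.
Definition conj_graph x k y := Gs x /\ Gs k /\ y = gconj G x k.

Lemma def_mul_graph :
  Def (fun w : 'I_(n + n + n) -> S => mul_graph (fstp (fstp w)) (sndp (fstp w)) (sndp w)).
Proof. exact: gmul_def. Qed.

Lemma def_inv_graph : Def (fun w : 'I_(n + n) -> S => inv_graph (fstp w) (sndp w)).
Proof.
have dM := def_reindex3 def_mul_graph (fun j => lshift n (rshift n j))
  (fun j => lshift n (lshift n j)) (@rshift (n + n) n).
apply: def_ext (def_fix_snd (P := fun w o => mul_graph (sndp w) (fstp w) o) one dM) _.
move=> w; split=> [[Gi [Gk ik1]] | [Gk ->]]; first by split; last exact: ginv_unique.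
by split; [apply: ginv_in | split; last exact: gmulV].
Qed.

Lemma def_conj_graph :
  Def (fun w : 'I_(n + n + n) -> S => conj_graph (fstp (fstp w)) (sndp (fstp w)) (sndp w)).
Proof.
pose Q w i := exists u, inv_graph (sndp (fstp w)) i /\
  mul_graph (fstp (fstp w)) (sndp (fstp w)) u /\ mul_graph i u (sndp w).
have dQ : Def (fun v : 'I_(n + n + n + n) -> S => Q (fstp v) (sndp v)).
  apply: (def_exists (Q := fun v u => inv_graph (sndp (fstp (fstp v))) (sndp v) /\
    mul_graph (fstp (fstp (fstp v))) (sndp (fstp (fstp v))) u /\
    mul_graph (sndp v) u (sndp (fstp v)))).
  apply: def_inter; first by apply: (def_reindex2 def_inv_graph).
  by apply: def_inter; apply: (def_reindex3 def_mul_graph).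
apply: def_ext (def_exists dQ) _ => w; split.
  move=> [i [u [[Gk ei] [[Gx [_ eu]] [_ [_ ey]]]]]].
  by rewrite /conj_graph -ey ei -eu.
move=> [Gx [Gk e]]; have Gk' := ginv_in Gk; have Gxk := gmul_in Gx Gk.
by exists (sndp (fstp w))^-1, (fstp (fstp w) * sndp (fstp w)); rewrite e.
Qed.

Lemma def_conjset (X K : tset S n) : Def X -> Def K ->
  (forall x, X x -> Gs x) -> (forall k, K k -> Gs k) -> Def (conjset G X K).
Proof.
move=> dX dK sX sK.
pose Q y x := exists k, X x /\ K k /\ conj_graph x k y.
have dQ : Def (fun w : 'I_(n + n) -> S => Q (fstp w) (sndp w)).
  apply: (def_exists (Q := fun w k => X (sndp w) /\ K k /\ conj_graph (sndp w) k (fstp w))).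
  apply: def_inter; first exact: def_reindex _ dX.
  apply: def_inter; first exact: def_reindex _ dK.
  by apply: (def_reindex3 def_conj_graph).
apply: def_ext (def_exists dQ) _ => y; split.
  by move=> [x [k [Xx [Kk [_ [_ ->]]]]]]; exists x, k.
move=> [x [k [Xx [Kk ->]]]]; exists x, k.
by have Gx := sX _ Xx; have Gk := sK _ Kk.
Qed.

Lemma def_coset_rel (K : tset S n) : Def K ->
  Def (fun w : 'I_(n + n) -> S => Gs (fstp w) /\ Gs (sndp w) /\ K ((sndp w)^-1 * fstp w)).
Proof.
move=> dK; pose Q w i := exists p, inv_graph (sndp w) i /\ mul_graph i (fstp w) p /\ K p.
have dQ : Def (fun v : 'I_(n + n + n) -> S => Q (fstp v) (sndp v)).
  apply: (def_exists (Q := fun v p => inv_graph (sndp (fstp v)) (sndp v) /\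
    mul_graph (sndp v) (fstp (fstp v)) p /\ K p)).
  apply: def_inter; first by apply: (def_reindex2 def_inv_graph).
  apply: def_inter; first by apply: (def_reindex3 def_mul_graph).
  exact: def_reindex _ dK.
apply: def_ext (def_exists dQ) _ => w; split.
  by move=> [i [p [[Gt ->] [[Gi [Ga <-]] Kp]]]].
move=> [Ga [Gt Kt'a]]; have Gt' := ginv_in Gt.
by exists (sndp w)^-1, ((sndp w)^-1 * fstp w).
Qed.

Lemma def_normalizer (Z : tset S n) :
  Def Z -> (forall z, Z z -> Gs z) -> Def (normalizer G Z).
Proof.
move=> dZ sZ; pose Q g z := Z z <-> exists z', Z z' /\ conj_graph z' g z.
have dQ : Def (fun w : 'I_(n + n) -> S => Q (fstp w) (sndp w)).
  apply: def_iff; first exact (def_reindex (@rshift n n) dZ).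
  apply: (def_exists (Q := fun w z' => Z z' /\ conj_graph z' (fstp w) (sndp w))).
  apply: def_inter; first exact (def_reindex (@rshift (n + n) n) dZ).
  by apply: (def_reindex3 def_conj_graph).
apply: def_ext (def_inter (gset_def G) (def_forall dQ)) _ => g.
split=> [[Gg normZ] | [Gg normZ]]; split=> // z; split.
- by move/normZ=> [z' [Zz' [_ [_ ->]]]]; exists z'.
- by move=> [z' [Zz' ->]]; apply/normZ; exists z'; have Gz' := sZ _ Zz'.
- by move/normZ=> [z' [Zz' ->]]; exists z'; have Gz' := sZ _ Zz'.
- by move=> [z' [Zz' [_ [_ ->]]]]; apply/normZ; exists z'.
Qed.

Lemma def_fgraph_conjV (P : tset S (n + n)) :
  Def P -> (forall w, P w -> Gs (fstp w) /\ Gs (sndp w)) ->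
  Def (fgraph P (fun w => gconj G (sndp w) (fstp w)^-1)).
Proof.
move=> dP sP; pose Q w i := inv_graph (fstp (fstp w)) i /\ conj_graph (sndp (fstp w)) i (sndp w).
have dR : Def (fun w => P (fstp w) /\ exists i, Q w i).
  apply: def_inter; first exact (def_reindex (@lshift (n + n) n) dP).
  apply: (def_exists (Q := Q)); apply: def_inter.
    by apply: (def_reindex2 def_inv_graph).
  by apply: (def_reindex3 def_conj_graph).
apply: def_ext dR _ => w; rewrite /Defs.fgraph; split.
  by move=> [Pw [i [[_ ->] [_ [_ ->]]]]].
move=> [Pw e]; have [Gt Gz] := sP _ Pw; have Gt' := ginv_in Gt.
by split=> //; exists (fstp (fstp w))^-1; rewrite /Q -e.
Qed.

End GroupDefinability.

Section Cosets.
Variables (S : dimStruct) (G : defGroup S) (K Tr : tset S (gn G)).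
Local Notation n := (gn G).
Local Notation Gs := (gset G).
Local Notation "x * y" := (gmul G x y).
Local Notation "x ^-1" := (ginv G x).
Local Notation one := (gone G).
Hypotheses (dK : Def K) (dTr : Def Tr) (trK : coset_transversal G K Tr).
Hypothesis sK : forall k, K k -> Gs k.
Implicit Types a g t : 'I_n -> S.

Definition coset_rep g := epsilon (inhabits one) (fun t => Tr t /\ K (t^-1 * g)).

Lemma coset_repP g : Gs g -> Tr (coset_rep g) /\ K ((coset_rep g)^-1 * g).
Proof.
move=> Gg; apply: (epsilon_spec (inhabits one) (fun t => Tr t /\ K (t^-1 * g))).
by have [t [Trt _]] := trK.2 g Gg; exists t.
Qed.

Lemma coset_rep_unique g t : Gs g -> Tr t -> K (t^-1 * g) -> coset_rep g = t.
Proof.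
move=> Gg Trt Kt'g; have [t0 [_ uniq_t0]] := trK.2 g Gg.
have [Trr Kr'g] := coset_repP Gg.
by rewrite (uniq_t0 t Trt Kt'g) (uniq_t0 _ Trr Kr'g).
Qed.

Lemma coset_transversal_sub t : Tr t -> Gs t.
Proof. exact: trK.1. Qed.

Lemma coset_rep_id t : K one -> Tr t -> coset_rep t = t.
Proof. by move=> K1 Trt; have Gt := coset_transversal_sub Trt; apply: coset_rep_unique; rewrite ?gmulV. Qed.

Lemma def_coset_rep_graph (A : tset S n) :
  Def A -> (forall a, A a -> Gs a) -> Def (fgraph A coset_rep).
Proof.
move=> dA sA.
have dR := def_inter (def_reindex (@lshift n n) dA)
  (def_inter (def_reindex (@rshift n n) dTr) (def_coset_rel dK)).
apply: def_ext dR _ => w; rewrite /Defs.fgraph -/(fstp w) -/(sndp w); split.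
  by move=> [Aa [Trt [Ga [Gt Kt'a]]]]; split=> //; apply: coset_rep_unique.
move=> [Aa <-]; have [Trr Kr'a] := coset_repP (sA _ Aa).
by have Ga := sA _ Aa; have Gr := coset_transversal_sub Trr.
Qed.

(* The fibre of [coset_rep] over [t] is the coset [t K], a translate of [K]. *)
Lemma dim_coset_saturated (A : tset S n) :
  Def A -> (forall a, A a -> Gs a) -> nonempty A ->
  (forall a0 a, A a0 -> Gs a -> K ((coset_rep a0)^-1 * a) -> A a) ->
  dim A = (dim (fimage A coset_rep) + dim K)%N.
Proof.
move=> dA sA [a0 Aa0] satA; have dg := def_coset_rep_graph dA sA.
apply: (dim_A2 dA dTr (ex_intro _ a0 Aa0) (ex_intro _ _ (coset_repP (sA _ Aa0)).1)
  (fun a Aa => (coset_repP (sA _ Aa)).1) dg).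
move=> t [a1 [Aa1 ra1]].
have Trt : Tr t by rewrite -ra1; exact: (coset_repP (sA _ Aa1)).1.
have Gt := coset_transversal_sub Trt; have Gt' := ginv_in Gt.
pose tK a := Gs a /\ Gs t /\ K (t^-1 * a).
have -> : fiber A coset_rep t = tK.
  apply: pred_ext => a; split=> [[Aa ra] | [Ga [_ Kt'a]]].
    have [Trr Kr'a] := coset_repP (sA _ Aa); have Gr := coset_transversal_sub Trr.
    by rewrite /tK -ra; split; first exact: sA.
  by split; [apply: (satA a1); rewrite ?ra1 | apply: coset_rep_unique].
have dtK : Def tK := def_fix_snd (P := fun a t => Gs a /\ Gs t /\ K (t^-1 * a)) t
  (def_coset_rel dK).
have dgtK : Def (fgraph tK (fun a => t^-1 * a)).
  have dR := def_inter (def_reindex (@lshift n n) dtK)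
    (def_fix_fst (P := @mul_graph S G) t^-1 (def_mul_graph G)).
  by apply: def_ext dR _ => w; rewrite /Defs.fgraph; split=> [[? [_ [_ ?]]] | [[? ?] ?]].
have netK : nonempty tK.
  have [_ Kt'a1] := coset_repP (sA _ Aa1); rewrite ra1 in Kt'a1.
  by exists a1; split; first exact: sA.
rewrite (dim_injective_image dtK dgtK netK); last first.
  by move=> x y [Gx _] [Gy _]; apply: gmulI.
congr dim; apply: pred_ext => k; split=> [[a [[_ [_ Kt'a]] <-]] // | Kk].
have Gk := sK Kk; have Gtk := gmul_in Gt Gk.
have tKk : t^-1 * (t * k) = k by rewrite gmulA // gmulV // gmul1.
by exists (t * k); rewrite /tK tKk.
Qed.

Lemma dim_transversal : K one -> dim (gset G) = (dim Tr + dim K)%N.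
Proof.
move=> K1; rewrite (dim_coset_saturated (gset_def G)) //; last first.
- by exists one; exact: gone_in.
congr (dim _ + _)%N; apply: pred_ext => t; split=> [[g [Gg <-]] | Trt].
  exact: (coset_repP Gg).1.
by exists t; split; [exact: coset_transversal_sub | apply: coset_rep_id].
Qed.

End Cosets.

Section Congruence.
Variables (S : dimStruct) (G : defGroup S) (N : tset S (gn G)).
Local Notation Gs := (gset G).
Local Notation "x * y" := (gmul G x y).
Local Notation "x ^-1" := (ginv G x).
Local Notation one := (gone G).
Hypothesis nN : def_normal_subgroup G N.
Implicit Types a b c x k : 'I_(gn G) -> S.

Definition congr_mod a b := N (a^-1 * b).

Let N1 : N one. Proof. by case: nN => -[_ [_ []]]. Qed.
Let NM x y : N x -> N y -> N (x * y). Proof. by case: nN => -[_ [_ [_ [NM _]]]] _; apply: NM. Qed.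
Let NV x : N x -> N x^-1. Proof. by case: nN => -[_ [_ [_ [_ NV]]]] _; apply: NV. Qed.
Let NJ x k : N x -> Gs k -> N (gconj G x k). Proof. by case: nN => _; apply. Qed.

Lemma congr_mod_refl a : Gs a -> congr_mod a a.
Proof. by move=> Ga; rewrite /congr_mod gmulV. Qed.

Lemma congr_mod_sym a b : Gs a -> Gs b -> congr_mod a b -> congr_mod b a.
Proof.
move=> Ga Gb /NV; have Ga' := ginv_in Ga.
by rewrite /congr_mod ginvM // ginvK.
Qed.

Lemma congr_mod_trans a b c : Gs a -> Gs b -> Gs c ->
  congr_mod a b -> congr_mod b c -> congr_mod a c.
Proof.
move=> Ga Gb Gc ab bc; have Ga' := ginv_in Ga; have Gb' := ginv_in Gb.
have Gb'c := gmul_in Gb' Gc.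
have := NM ab bc; rewrite -gmulA //.
by rewrite (gmulA Gb Gb' Gc) gmulgV // gmul1.
Qed.

Lemma congr_modM a a' b b' : Gs a -> Gs a' -> Gs b -> Gs b' ->
  congr_mod a a' -> congr_mod b b' -> congr_mod (a * b) (a' * b').
Proof.
move=> Ga Ga' Gb Gb' aa' bb'; rewrite /congr_mod.
have Gai := ginv_in Ga; have Gbi := ginv_in Gb.
have Gaa' := gmul_in Gai Ga'; have Gbb' := gmul_in Gbi Gb'.
have := NM (NJ aa' Gb) bb'; rewrite /gconj.
rewrite -(gmulA Gbi (gmul_in Gaa' Gb) Gbb') -(gmulA Gaa' Gb Gbb').
rewrite (gmulA Gb Gbi Gb') gmulgV // gmul1 //.
have Ga'b' := gmul_in Ga' Gb'.
by rewrite ginvM // -(gmulA Gbi Gai) // (gmulA Gai Ga' Gb').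
Qed.

Lemma congr_modV a a' : Gs a -> Gs a' -> congr_mod a a' -> congr_mod a^-1 a'^-1.
Proof.
move=> Ga Ga' aa'; rewrite /congr_mod ginvK //.
have Gai := ginv_in Ga; have Gai' := ginv_in Ga'.
have := NJ (NV aa') Gai; rewrite /gconj ginvK // ginvM // ginvK //.
by rewrite -(gmulA Gai' Ga Gai) gmulgV // gmulg1.
Qed.

Lemma congr_mod_conj x x' k k' : Gs x -> Gs x' -> Gs k -> Gs k' ->
  congr_mod x x' -> congr_mod k k' -> congr_mod (gconj G x k) (gconj G x' k').
Proof.
move=> Gx Gx' Gk Gk' xx' kk'.
have Gk1 := ginv_in Gk; have Gk1' := ginv_in Gk'.
by apply: congr_modM => //; [apply: gmul_in | apply: gmul_in | apply: congr_modV
  | apply: congr_modM].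
Qed.

Variable Tr : tset S (gn G).
Hypotheses (dTr : Def Tr) (trN : coset_transversal G N Tr).

Lemma congr_mod_coset_rep a b : Gs a -> Gs b ->
  coset_rep N Tr a = coset_rep N Tr b -> congr_mod a b.
Proof.
move=> Ga Gb rab; have [TrNa ra'a] := coset_repP trN Ga; have [_ rb'b] := coset_repP trN Gb.
have Gr := coset_transversal_sub trN TrNa; rewrite -rab in rb'b.
by apply: congr_mod_trans rb'b => //; apply: congr_mod_sym.
Qed.

Lemma dim_congr_mod_closed (A : tset S (gn G)) :
  Def A -> (forall a, A a -> Gs a) -> nonempty A ->
  (forall a0 a, A a0 -> Gs a -> congr_mod a0 a -> A a) ->
  dim A = (dim (fimage A (coset_rep N Tr)) + dim N)%N.
Proof.
move=> dA sA neA closA; have [[dN [sN _]] _] := nN.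
apply: dim_coset_saturated => // a0 a Aa0 Ga ra0a; apply: (closA a0) => //.
have Ga0 := sA _ Aa0; have [Trr a0r] := coset_repP trN Ga0; have Gr := coset_transversal_sub trN Trr.
by apply: congr_mod_trans ra0a => //; apply: congr_mod_sym.
Qed.

End Congruence.

Section Proposition.
Variables (S : dimStruct) (G : defGroup S) (N H Y TrN TrK : tset S (gn G)).
Local Notation Gs := (gset G).
Local Notation "x * y" := (gmul G x y).
Local Notation "x ^-1" := (ginv G x).
Local Notation one := (gone G).
Implicit Types a g h k t x y z : 'I_(gn G) -> S.

Hypotheses (nN : def_normal_subgroup G N) (sgH : def_subgroup G H).
Hypotheses (sNH : forall x, N x -> H x) (sYH : forall y, Y y -> H y).
Hypotheses (dY : Def Y) (lYH : large_in Y H).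
Hypotheses (dTrN : Def TrN) (trN : coset_transversal G N TrN).

Let Z h := H h /\ ~ conjset G Y H h.
Let K := normalizer G Z.
Hypotheses (dTrK : Def TrK) (trK : coset_transversal G K TrK).

Let dH : Def H. Proof. by case: sgH. Qed.
Let sH x : H x -> Gs x. Proof. by case: sgH => _ [sH _]; apply: sH. Qed.
Let H1 : H one. Proof. by case: sgH => _ [_ []]. Qed.
Let HM x y : H x -> H y -> H (x * y). Proof. by case: sgH => _ [_ [_ [HM _]]]; apply: HM. Qed.
Let HV x : H x -> H x^-1. Proof. by case: sgH => _ [_ [_ [_ HV]]]; apply: HV. Qed.
Let HJ x k : H x -> H k -> H (gconj G x k).
Proof. by move=> Hx Hk; apply: HM (HV Hk) (HM Hx Hk). Qed.
Let sY y : Y y -> Gs y. Proof. by move=> Yy; apply/sH/sYH. Qed.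
Let sZ z : Z z -> Gs z. Proof. by case=> Hz _; apply: sH. Qed.
Let dZ : Def Z. Proof. exact: def_inter dH (def_compl (def_conjset dY dH sY sH)). Qed.
Let N1 : N one. Proof. by case: nN => -[_ [_ []]]. Qed.

Lemma Y_nonempty : nonempty Y.
Proof.
apply: NNPP => noY; have [_ [neH ltHH]] := lYH.
have HY : (fun y => H y /\ ~ Y y) = H.
  by apply: pred_ext => x; split=> [[] // | Hx]; split=> // Yx; apply: noY; exists x.
by rewrite HY ltnn in ltHH; case: ltHH => [/(_ neH) |].
Qed.

Lemma dim_Z_ltn : dim_ltn Z (dim H).
Proof.
have [_ [_ ltHY]] := lYH.
apply: dim_ltn_sub dZ (def_inter dH (def_compl dY)) _ ltHY => h [Hh nYHh].
have Gh := sH Hh; split=> // Yh; apply: nYHh.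
by exists h, one; rewrite gconj1.
Qed.

(* [Z] is invariant under conjugation by [H], since [Y^H] is. *)
Lemma H_sub_normalizer_Z h : H h -> K h.
Proof.
move=> Hh; have Gh := sH Hh; have Gh' := ginv_in Gh; split=> // z; split.
  move=> [Hz nYHz]; have Gz := sH Hz.
  exists (gconj G z h^-1); split; last by rewrite gconjVK.
  split; first exact: HJ (HV Hh).
  move=> [y [k [Yy [Hk e]]]]; have Gy := sY Yy; have Gk := sH Hk.
  apply: nYHz; exists y, (k * h); do !split=> //; first exact: HM.
  by rewrite -gconjM // -e gconjVK.
move=> [z' [[Hz' nYHz'] ->]]; have Gz' := sH Hz'; split; first exact: HJ.
move=> [y [k [Yy [Hk e]]]]; have Gy := sY Yy; have Gk := sH Hk.
apply: nYHz'; exists y, (k * h^-1); do !split=> //; first exact: HM (HV Hh).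
by rewrite -gconjM // -e gconjK.
Qed.

Let HG := conjset G H Gs.
Let YG := conjset G Y Gs.
Let ZG := conjset G Z Gs.
Let dHG : Def HG. Proof. exact: def_conjset dH (gset_def G) sH (fun _ Gg => Gg). Qed.
Let dYG : Def YG. Proof. exact: def_conjset dY (gset_def G) sY (fun _ Gg => Gg). Qed.
Let dZG : Def ZG. Proof. exact: def_conjset dZ (gset_def G) sZ (fun _ Gg => Gg). Qed.

Lemma conjugates_H_split y : HG y <-> YG y \/ ZG y.
Proof.
split; last first.
  move=> [[y0 [g [Yy0 [Gg ->]]]] | [z [g [[Hz _] [Gg ->]]]]]; last by exists z, g.
  by exists y0, g; split=> //; apply: sYH.
move=> [h [g [Hh [Gg ->]]]].
have [[y0 [k [Yy0 [Hk ->]]]] | nYHh] := classic (conjset G Y H h); last first.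
  by right; exists h, g.
have Gy0 := sY Yy0; have Gk := sH Hk.
by left; exists y0, (k * g); rewrite gconjM //; do !split=> //; apply: gmul_in.
Qed.

(* Writing [g^-1 = t k] with [t] in [TrK] and [k] in [K], the conjugate [z^g]
   becomes [(z^(k^-1))^(t^-1)], and [z^(k^-1)] stays in [Z]. *)
Lemma conjugates_Z_sub_image :
  let P w := TrK (fstp w) /\ Z (sndp w) in
  forall y, ZG y -> fimage P (fun w => gconj G (sndp w) (fstp w)^-1) y.
Proof.
move=> P y [z [g [Zz [Gg ->]]]]; have Gz := sZ Zz; have Gg' := ginv_in Gg.
have [TrKt Kt'g'] := coset_repP trK Gg'.
set t := coset_rep K TrK g^-1 in TrKt Kt'g' *.
have Gt := coset_transversal_sub trK TrKt; have Gt' := ginv_in Gt.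
set k := t^-1 * g^-1 in Kt'g'; have Gk : Gs k by apply: gmul_in.
have [_ normZ] := Kt'g'; have [z' [Zz' ->]] := proj1 (normZ z) Zz.
exists (join t z'); rewrite /P fstp_join sndp_join; split=> //.
have -> : g = k^-1 * t^-1.
  by rewrite /k ginvM // !ginvK // -gmulA // gmulgV // gmulg1.
have Gk' := ginv_in Gk; have Gz' := sZ Zz'; have Gz'k := gconj_in Gz' Gk.
by rewrite -gconjM // gconjK.
Qed.

Lemma dim_conjugates_Z_ltn : dim_ltn ZG (dim Gs).
Proof.
have [neZ | noZ] := classic (nonempty Z); last first.
  by left=> -[_ [z [_ [Zz _]]]]; apply: noZ; exists z.
have neTrK : nonempty TrK by exists (coset_rep K TrK one); case: (coset_repP trK (gone_in G)).
have [dP dimP] := dim_prod dTrK dZ neTrK neZ.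
set P := fun w => _ in dP dimP.
have neP : nonempty P.
  by have [[t TrKt] [z Zz]] := (neTrK, neZ); exists (join t z); rewrite /P fstp_join sndp_join.
have dgphi := def_fgraph_conjV dP (fun w Pw => conj (coset_transversal_sub trK Pw.1) (sZ Pw.2)).
apply: dim_ltn_sub dZG (def_fimage dgphi) conjugates_Z_sub_image _; right.
apply: leq_ltn_trans (dim_image_le dP dgphi neP) _.
have K1 : K one := H_sub_normalizer_Z H1.
have dK : Def K := def_normalizer dZ sZ.
rewrite dimP (dim_transversal dK dTrK trK (fun _ Kg => Kg.1) K1) ltn_add2l.
case: dim_Z_ltn => [// | ltZH]; apply: leq_trans ltZH _.
by apply: dim_sub dH dK _ H_sub_normalizer_Z; exists one.
Qed.

Let qc := qconjset G N TrN (qimage G N TrN H) TrN.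
Let rep := coset_rep N TrN.
Let sHG y : HG y -> Gs y. Proof. by move=> [h [g [Hh [Gg ->]]]]; apply: gconj_in (sH Hh) Gg. Qed.

Lemma image_conjugates_H : fimage HG rep = qc.
Proof.
apply: pred_ext => t; split.
  move=> [_ [[h [g [Hh [Gg ->]]]] <-]]; have Gh := sH Hh; have Ghg := gconj_in Gh Gg.
  have [TrNr r'hg] := coset_repP trN Ghg; have Gr := coset_transversal_sub trN TrNr.
  have [TrNrh rh'h] := coset_repP trN Gh; have Grh := coset_transversal_sub trN TrNrh.
  have [TrNrg rg'g] := coset_repP trN Gg; have Grg := coset_transversal_sub trN TrNrg.
  split=> //; exists (rep h), (rep g); do !split=> //; first by exists h.
  apply: congr_mod_trans r'hg _ => //; try exact: gconj_in.
  by apply: congr_mod_conj => //; apply: congr_mod_sym.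
move=> [TrNt [x [k [[TrNx [h [Hh x'h]]] [TrNk t'xk]]]]].
have Gx := coset_transversal_sub trN TrNx; have Gk := coset_transversal_sub trN TrNk; have Gh := sH Hh.
have Gt := coset_transversal_sub trN TrNt; have Gxk := gconj_in Gx Gk; have Ghk := gconj_in Gh Gk.
exists (gconj G h k); split; first by exists h, k.
apply: coset_rep_unique => //; apply: congr_mod_trans t'xk _ => //.
by apply: congr_mod_conj => //; apply: congr_mod_refl.
Qed.

Lemma conjugates_H_congr_closed a0 a : HG a0 -> Gs a -> congr_mod N a0 a -> HG a.
Proof.
move=> [h [g [Hh [Gg ->]]]] Ga hga; have Gh := sH Hh; have Gg' := ginv_in Gg.
exists (gconj G a g^-1), g; split; last by rewrite gconjVK.
have Gag' := gconj_in Ga Gg'; have Gh' := ginv_in Gh.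
have hag' : congr_mod N h (gconj G a g^-1).
  rewrite -(gconjK Gh Gg); apply: congr_mod_conj => //; first exact: gconj_in.
  exact: congr_mod_refl.
by rewrite -(gmulKVg Gh Gag'); apply: HM => //; apply: sNH.
Qed.

Lemma dim_conjugates_H : nonempty HG -> dim HG = (dim qc + dim N)%N.
Proof.
move=> neHG; rewrite -image_conjugates_H.
by apply: dim_congr_mod_closed => //; exact: conjugates_H_congr_closed.
Qed.

Let CG y := Gs y /\ ~ HG y.

Lemma image_not_conjugates_H : fimage CG rep = fun t => TrN t /\ ~ qc t.
Proof.
apply: pred_ext => t; split.
  move=> [y [[Gy nHGy] <-]]; split; first exact: (coset_repP trN Gy).1.
  rewrite -image_conjugates_H => -[a [HGa ra]]; apply: nHGy.
  have Ga := sHG HGa.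
  exact: conjugates_H_congr_closed HGa Gy (congr_mod_coset_rep nN trN Ga Gy ra).
move=> [TrNt nqct]; have Gt := coset_transversal_sub trN TrNt; exists t; split; last exact: coset_rep_id.
split=> // HGt; apply: nqct; rewrite -image_conjugates_H.
by exists t; split; last exact: coset_rep_id.
Qed.

Lemma dim_not_conjugates_H :
  nonempty CG -> dim CG = (dim (fun t => TrN t /\ ~ qc t) + dim N)%N.
Proof.
move=> neCG; rewrite -image_not_conjugates_H.
apply: dim_congr_mod_closed (def_inter (gset_def G) (def_compl dHG)) _ neCG _ => //.
- by move=> y [].
- move=> a0 a [Ga0 nHGa0] Ga a0a; split=> // HGa; apply: nHGa0.
  exact: conjugates_H_congr_closed HGa Ga0 (congr_mod_sym nN Ga0 Ga a0a).
Qed.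

Let dim_G_TrN : dim Gs = (dim TrN + dim N)%N.
Proof. by case: nN => -[dN [sN _]] _; apply: dim_transversal. Qed.

Lemma weakly_generous_Y : q_weakly_generous G N TrN H -> weakly_generous G Y.
Proof.
move=> [neqc [_ dim_qc]].
have neHG : nonempty HG.
  by move: neqc; rewrite -/qc -image_conjugates_H => -[_ [a [HGa _]]]; exists a.
have neYG : nonempty YG.
  have [y Yy] := Y_nonempty; have Gy := sY Yy; have G1 := gone_in G.
  by exists y, y, one; rewrite gconj1.
split=> //; split; first by exists one; apply: gone_in.
have HG_YZ : HG = fun y => YG y \/ ZG y by apply: pred_ext; exact: conjugates_H_split.
have dim_HG : dim HG = dim Gs by rewrite dim_conjugates_H // dim_G_TrN -dim_qc.
have [neZG | noZG] := classic (nonempty ZG); last by rewrite -dim_HG HG_YZ union_empty_r.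
case: dim_conjugates_Z_ltn => [// | ltZG].
move: dim_HG; rewrite HG_YZ (dim_A4 dYG dZG neYG neZG) /maxn.
by case: ltnP => // _ eZG; rewrite eZG ltnn in ltZG.
Qed.

Lemma largely_generous_Y : q_largely_generous G N TrN H -> largely_generous G Y.
Proof.
move=> [_ [_ ltqc]].
have dCG : Def CG := def_inter (gset_def G) (def_compl dHG).
have ltCG : dim_ltn CG (dim Gs).
  have [[y CGy] | noCG] := classic (nonempty CG); last by left.
  right; rewrite dim_not_conjugates_H; last by exists y.
  rewrite dim_G_TrN ltn_add2r; case: ltqc => // [[]].
  by rewrite -image_not_conjugates_H; exists (rep y), y.
split; first by move=> _ [y [g [Yy [Gg ->]]]]; apply: gconj_in (sY Yy) Gg.
split; first by exists one; apply: gone_in.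
apply: dim_ltn_sub (def_inter (gset_def G) (def_compl dYG)) (def_or dCG dZG) _
  (dim_ltn_union dCG dZG ltCG dim_conjugates_Z_ltn).
move=> y [Gy nYGy]; have [HGy | nHGy] := classic (HG y); last by left.
by case/conjugates_H_split: HGy => // ZGy; right.
Qed.

End Proposition.

Theorem proposition5p1 (S : dimStruct) (G : defGroup S)
    (N H Y TrN : tset S (gn G)) :
  def_normal_subgroup G N ->
  def_subgroup G H ->
  (forall x, N x -> H x) ->
  Def Y -> (forall y, Y y -> H y) -> large_in Y H ->
  Def TrN -> coset_transversal G N TrN ->
  (exists TrK, Def TrK /\
     coset_transversal G (normalizer G (fun h => H h /\ ~ conjset G Y H h)) TrK) ->
  (q_weakly_generous G N TrN H -> weakly_generous G Y) /\
  (q_largely_generous G N TrN H -> largely_generous G Y).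
Proof.
move=> nN sgH sNH dY sYH lYH dTrN trN [TrK [dTrK trK]]; split.
  exact: weakly_generous_Y trK.
exact: largely_generous_Y trK.
Qed.
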